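(* Let $(\Omega,\mathcal{F},\mathbb{P})$ be a nonatomic probability space and $(\Phi,\Psi)$ an Orlicz pair as in the context. Let $X\in L^\Phi$. Then the net $(\mathbb{E}[X|\pi])_{\pi\in\Pi}$ order converges to $X$ in $L^\Phi$ if and only if $X\in L^\infty$.
   Context: $(\Omega,\mathcal{F},\mathbb{P})$ is a nonatomic probability space. An Orlicz function is a convex, increasing $\Phi:[0,\infty)\to[0,\infty)$ with $\Phi(0)=0$; its conjugate is $\Psi(s)=\sup_{t\ge0}(ts-\Phi(t))$. Standing assumption: $\Phi(t)>0$ for $t>0$ and $\lim_{t\to\infty}\Phi(t)/t=\infty$. $L^\Phi$ is the space (a Banach lattice under the a.s. order) of random variables $X$ (mod a.s. equality) with $\|X\|_\Phi:=\inf\{\lambda>0:\mathbb{E}[\Phi(|X|/\lambda)]\le 1\}<\infty$. $\Pi$ denotes the set of all finite measurable partitions of $\Omega$ whose members all have nonzero probability, directed by refinement; $\mathbb{E}[X|\pi]:=\mathbb{E}[X|\sigma(\pi)]$. A net $(X_\alpha)$ in $L^\Phi$ order converges to $X\in L^\Phi$ if there is a net $(Y_\alpha)$ in $L^\Phi$ (same index set) which is decreasing with infimum $0$ in $L^\Phi$ and satisfies $|X_\alpha-X|\le Y_\alpha$ for all $\alpha$. *)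

From HB Require Import structures.
From mathcomp Require Import all_boot all_order all_algebra.
From mathcomp Require Import all_classical all_reals.
From mathcomp Require Import topology normedtype sequences numfun measure lebesgue_measure lebesgue_integral probability.
From Stdlib Require List.

Set Implicit Arguments.
Unset Strict Implicit.
Unset Printing Implicit Defensive.

Import Order.TTheory GRing.Theory Num.Theory.
Import numFieldNormedType.Exports.
Local Open Scope classical_set_scope.
Local Open Scope ring_scope.

Section OrliczDefs.
Context {d : measure_display} {T : measurableType d} {R : realType}.

Definition nonatomic (P : probability T R) : Prop :=
  forall A : set T, measurable A -> (0 < P A)%E ->
    exists B : set T, [/\ measurable B, B `<=` A, (0 < P B)%E & (P B < P A)%E].

Definition orlicz_fun (Phi : R -> R) : Prop :=
  [/\ Phi 0 = 0,
      (forall s t l : R, 0 <= s -> 0 <= t -> 0 <= l <= 1 ->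
         Phi (l * s + (1 - l) * t) <= l * Phi s + (1 - l) * Phi t),
      (forall s t : R, 0 <= s -> s <= t -> Phi s <= Phi t),
      (forall t : R, 0 < t -> 0 < Phi t) &
      ((fun t => Phi t / t) @ +oo --> +oo)].

(* X belongs to L^Phi: X is measurable and its Luxemburg norm
   inf {lam > 0 : E[Phi(|X|/lam)] <= 1} is finite, i.e. the set is nonempty. *)
Definition in_LPhi (P : probability T R) (Phi : R -> R) (X : T -> R) : Prop :=
  measurable_fun setT X /\
  exists lam : R, 0 < lam /\
    (\int[P]_x (Phi (`|X x| / lam))%:E <= 1)%E.

Definition in_Linfty (P : probability T R) (X : T -> R) : Prop :=
  measurable_fun setT X /\
  exists M : R, {ae P, forall x, `|X x| <= M}.

Definition is_partition (P : probability T R) (pi : seq (set T)) : Prop :=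
  [/\ (forall A, List.In A pi -> measurable A /\ (0 < P A)%E),
      List.NoDup pi,
      (forall A B, List.In A pi -> List.In B pi -> A <> B -> A `&` B = set0) &
      (forall x : T, exists A, List.In A pi /\ A x)].

(* Refinement: pi' refines pi (pi <= pi' in the direction of Pi). *)
Definition refines (pi pi' : seq (set T)) : Prop :=
  forall B, List.In B pi' -> exists A, List.In A pi /\ B `<=` A.

Definition condexp_part (P : probability T R) (X : T -> R)
    (pi : seq (set T)) : T -> R :=
  fun x => \sum_(A <- pi)
     (fine (\int[P]_(y in A) (X y)%:E) / fine (P A)) * (\1_A x : R).

(* Order convergence in the Banach lattice L^Phi (a.s. order) of a net
   (F i)_{i in Idx} directed by le, to X. *)
Definition order_conv (P : probability T R) (Phi : R -> R)
    (I : Type) (Idx : I -> Prop) (le : I -> I -> Prop)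
    (F : I -> T -> R) (X : T -> R) : Prop :=
  exists Y : I -> T -> R,
    [/\ (forall i, Idx i -> in_LPhi P Phi (Y i)),
        (forall i j, Idx i -> Idx j -> le i j ->
           {ae P, forall x, Y j x <= Y i x}),
        (* infimum 0 in L^Phi: 0 is a lower bound ... *)
        (forall i, Idx i -> {ae P, forall x, 0 <= Y i x}),
        (* ... and the greatest one among elements of L^Phi *)
        (forall Z : T -> R, in_LPhi P Phi Z ->
           (forall i, Idx i -> {ae P, forall x, Z x <= Y i x}) ->
           {ae P, forall x, Z x <= 0}) &
        (forall i, Idx i -> {ae P, forall x, `|F i x - X x| <= Y i x})].

End OrliczDefs.

(* For X bounded by M a.s., the net is dominated by the essential oscillation
   (ess sup - ess inf) of X on the atom of pi containing the point.  It bounds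
   |E[X|pi] - X|, decreases under refinement, and has infimum 0: almost every
   point lies in a level strip {k e <= X + M <= (k+1) e}, and such a strip of
   positive probability is, up to a null set, an atom of some partition.
   Conversely, a decreasing dominating net is dominated by its value Y at the
   trivial partition.  Pick K with P(|X| + |Y| <= K) > 0.  If X were not
   essentially bounded, nonatomicity would give events C and D with
   0 < P C <= P D <= 1/4, |X| + |Y| <= K on C, and s X > 5K + 1 on D for a sign
   s.  For pi = {C u D, complement}, E[X|pi] is within 2K of 0 at points of C,
   while s E[X|C u D] >= (5K + 1 - K) / 2 > 2K. *)

From HB Require Import structures.
From mathcomp Require Import all_boot all_order all_algebra.
From mathcomp Require Import all_classical all_reals.
From mathcomp Require Import topology normedtype sequences numfun measure lebesgue_measure lebesgue_integral probability.
From mathcomp Require Import interval_inference measurable_realfun ess_sup_inf lra.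
From Stdlib Require List.
Import Order.TTheory GRing.Theory Num.Theory.
Local Open Scope classical_set_scope.
Local Open Scope ring_scope.

Set Implicit Arguments.
Unset Strict Implicit.
Unset Printing Implicit Defensive.

Section measure_facts.
Context {d : measure_display} {T : measurableType d} {R : realType}.
Variable P : probability T R.

Lemma measurable_set_ler (f g : T -> R) :
  measurable_fun setT f -> measurable_fun setT g -> measurable [set x | f x <= g x].
Proof.
move=> mf mg; have := measurable_fun_ler mf mg measurableT (Y := [set true]).
by rewrite setTI; apply.
Qed.

Lemma measurable_set_ltr (f g : T -> R) :
  measurable_fun setT f -> measurable_fun setT g -> measurable [set x | f x < g x].
Proof.
move=> mf mg; have := measurable_fun_ltr mf mg measurableT (Y := [set true]).
by rewrite setTI; apply.
Qed.

Lemma measurable_set_itvcc (f : T -> R) (a b : R) :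
  measurable_fun setT f -> measurable [set x | a <= f x <= b].
Proof.
move=> mf; rewrite (_ : [set x | _] = f @^-1` `[a, b]).
  by rewrite -[_ @^-1` _]setTI; exact: mf.
by apply/seteqP; split => x /=; rewrite in_itv.
Qed.

Lemma ae_witness (C : set T) (Q : T -> Prop) : measurable C -> (0 < P C)%E ->
  {ae P, forall x, Q x} -> exists x, C x /\ Q x.
Proof.
move=> mC PC [N [mN PN sN]]; apply: contrapT => noQ.
have CN : C `<=` N by move=> x Cx; apply: sN => Qx; apply: noQ; exists x.
by move: PC; rewrite (subset_measure0 mC mN CN PN) ltxx.
Qed.

Lemma measure_gt0_setU (A B : set T) : measurable A -> measurable B ->
  (0 < P (A `|` B))%E -> (0 < P A)%E \/ (0 < P B)%E.
Proof.
move=> mA mB; have [|A0] := ltP 0%E (P A); first by left.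
have [|B0] := ltP 0%E (P B); first by right.
have nullB : P B = 0 by apply/eqP; rewrite eq_le B0 measure_ge0.
by rewrite measureU0 // ltNge A0.
Qed.

Lemma measure_gt0_cover (A : set T) (F : nat -> set T) :
  measurable A -> (forall k, measurable (F k)) -> (0 < P A)%E ->
  {ae P, forall x, A x -> exists k, F k x} ->
  exists k, (0 < P (A `&` F k))%E.
Proof.
move=> mA mF PA cover; apply: contrapT => small.
have null k : P.-negligible (A `&` F k).
  apply/negligibleP; first exact: measurableI.
  apply/eqP; rewrite eq_le measure_ge0 andbT leNgt; apply/negP => Pk.
  by apply: small; exists k.
have : P.-negligible A.
  apply: negligibleS (negligibleU (negligible_bigcup null) cover) => x Ax.
  have [[k Fk]|noF] := pselect (exists k, F k x); first by left; exists k.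
  by right => /(_ Ax).
by move=> /(measure_negligible mA) A0; move: PA; rewrite A0 ltxx.
Qed.

Lemma measure_gt0_sublevel (f : T -> R) : measurable_fun setT f ->
  exists k : nat, (0 < P [set x | (f x <= k%:R)%R])%E.
Proof.
move=> mf; have PT : (0 < P setT)%E by rewrite probability_setT.
have cover : {ae P, forall x, setT x -> exists k : nat, f x <= k%:R}.
  by apply: aeW => x _; exists (Num.truncn (f x)).+1; rewrite ltW ?truncnS_gt.
have [k|k] := measure_gt0_cover measurableT _ PT cover.
  by apply: measurable_set_ler.
by rewrite setTI; exists k.
Qed.

Lemma not_ae_le_measure_gt0 (f : T -> R) (c : R) : measurable_fun setT f ->
  ~ {ae P, forall x, `|f x| <= c} -> (0 < P [set x | (c < `|f x|)%R])%E.
Proof.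
move=> mf notb; have mS : measurable [set x | c < `|f x|].
  by apply: measurable_set_ltr => //; apply: measurableT_comp.
rewrite lt0e measure_ge0 andbT; apply/eqP => S0; apply: notb.
by exists [set x | c < `|f x|]; split => // x /= /negP; rewrite -ltNge.
Qed.

Lemma ae_forall_seq (Q : set T -> T -> Prop) (s : seq (set T)) :
  (forall A, List.In A s -> {ae P, forall x, Q A x}) ->
  {ae P, forall x, forall A, List.In A s -> Q A x}.
Proof.
elim: s => [|A s IH] aeQ; first by apply: aeW => x A [].
apply: filterS2 (aeQ A (or_introl erefl)) (IH (fun B sB => aeQ B (or_intror sB))).
by move=> x QA Qs B [<-|sB] //; exact: Qs.
Qed.

Lemma measure_gt0_strip (E : set T) (f : T -> R) (e : R) :
  measurable E -> measurable_fun setT f -> (0 < P E)%E -> 0 < e ->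
  {ae P, forall x, 0 <= f x} ->
  exists k : nat, (0 < P (E `&` [set x | (k%:R * e <= f x <= k.+1%:R * e)%R]))%E.
Proof.
move=> mE mf PE e0 f_ge0.
apply: measure_gt0_cover => // [k|]; first exact: measurable_set_itvcc.
apply: filterS f_ge0 => x fx0 _; exists (Num.truncn (f x / e)) => /=.
have := truncn_itv (divr_ge0 fx0 (ltW e0)).
by rewrite ler_pdivlMr // ltr_pdivrMr // => /andP[-> /ltW ->].
Qed.

Lemma ae_le0_of_superlevel_null (f : T -> R) : measurable_fun setT f ->
  (forall e, 0 < e -> P [set x | e < f x] = 0) -> {ae P, forall x, f x <= 0}.
Proof.
move=> mf null; have mS (c : R) : measurable [set x | c < f x].
  by apply: measurable_set_ltr.
exists [set x | 0 < f x]; split; [exact: mS | | by move=> x /= /negP; rewrite -ltNge].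
apply/eqP; rewrite eq_le measure_ge0 andbT leNgt; apply/negP => Ppos.
have cover : {ae P, forall x, 0 < f x -> exists k, k.+1%:R^-1 < f x}.
  by apply: aeW => x /ltr_add_invr[k]; rewrite add0r; exists k.
have [k] := measure_gt0_cover (mS 0) (fun k => mS k.+1%:R^-1) Ppos cover.
rewrite setIidr => [|x /= kx]; last by rewrite (lt_trans _ kx) // invr_gt0.
by rewrite null ?ltxx // invr_gt0.
Qed.

End measure_facts.

Section partitions.
Context {d : measure_display} {T : measurableType d} {R : realType}.
Variable P : probability T R.

Definition pr (A : set T) : R := fine (P A).

Lemma prE (A : set T) : measurable A -> P A = (pr A)%:E.
Proof. by move=> mA; rewrite fineK // fin_num_measure. Qed.

Lemma pr_gt0 (A : set T) : measurable A -> (0 < P A)%E -> 0 < pr A.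
Proof. by move=> mA; rewrite prE // lte_fin. Qed.

Lemma pr_ge0 (A : set T) : 0 <= pr A.
Proof. exact/fine_ge0/measure_ge0. Qed.

Lemma pr_le1 (A : set T) : measurable A -> pr A <= 1.
Proof. by move=> mA; rewrite -lee_fin -prE // probability_le1. Qed.

Definition mean_on (f : T -> R) (A : set T) : R := (\int[P]_(x in A) f x) / pr A.

Lemma sum_indic_eq0 (pi : seq (set T)) (c : set T -> R) (x : T) :
  (forall B, List.In B pi -> ~ B x) -> \sum_(B <- pi) c B * \1_B x = 0.
Proof.
elim: pi => [|B pi IH] out; first by rewrite big_nil.
rewrite big_cons IH => [|C inC]; last by apply: out; right.
by rewrite indicE memNset ?mulr0 ?addr0 //; apply: out; left.
Qed.

Lemma sum_partition_at (pi : seq (set T)) (c : set T -> R) (A : set T) (x : T) :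
  is_partition P pi -> List.In A pi -> A x -> \sum_(B <- pi) c B * \1_B x = c A.
Proof.
case=> _ nd disj _ inA Ax.
have out B : List.In B pi -> B <> A -> ~ B x.
  by move=> inB BA Bx; have : (B `&` A) x by []; rewrite disj.
have [l1 [l2 pi_eq]] := List.in_split A pi inA; subst pi.
have notA := List.NoDup_remove_2 _ _ _ nd.
have outl B : List.In B (l1 ++ l2) -> ~ B x.
  move=> inB; apply: out; last by move=> BA; apply: notA; rewrite -BA.
  by apply/List.in_app_iff; case/List.in_app_iff: inB; [left | right; right].
rewrite big_cat big_cons indicE mem_set // mulr1.
rewrite !sum_indic_eq0 => [|B inB|B inB]; last 2 first.
- by apply: outl; apply/List.in_app_iff; right.
- by apply: outl; apply/List.in_app_iff; left.
by rewrite /= add0r addr0.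
Qed.

Lemma condexp_part_at (X : T -> R) (pi : seq (set T)) (A : set T) (x : T) :
  is_partition P pi -> List.In A pi -> A x -> condexp_part P X pi x = mean_on X A.
Proof. exact: sum_partition_at. Qed.

Lemma is_partition_setT : is_partition P [:: setT].
Proof.
split.
- by move=> A [<-|[]]; split => //; rewrite probability_setT lte01.
- by constructor; [case | constructor].
- by move=> A B [<-|[]] [<-|[]].
- by move=> x; exists setT; split => //; left.
Qed.

Lemma is_partition_setC (B : set T) : measurable B ->
  (0 < P B)%E -> (0 < P (~` B))%E -> is_partition P [:: B; ~` B].
Proof.
move=> mB PB PCB; split.
- by move=> A [<-|[<-|[]]]; split => //; exact: measurableC.
- constructor; last by constructor; [case | constructor].
  have /set0P[x Bx] : B != set0 by apply: contraTneq PB => ->; rewrite measure0 ltxx.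
  by case => // CBB; have : (~` B) x by rewrite CBB.
- by move=> A1 A2 [<-|[<-|[]]] [<-|[<-|[]]] // _; rewrite ?setICr ?setICl.
- move=> x; have [Bx|nBx] := pselect (B x); first by exists B; split => //; left.
  by exists (~` B); split => //; right; left.
Qed.

Lemma exists_partition_atom_ae (S : set T) : measurable S -> (0 < P S)%E ->
  exists pi A, [/\ is_partition P pi, List.In A pi, S `<=` A &
                   {ae P, forall x, A x -> S x}].
Proof.
move=> mS PS; have [PCS|CS0] := ltP 0%E (P (~` S)).
  exists [:: S; ~` S], S; split => //; first exact: is_partition_setC.
  - by left.
  - by apply: aeW.
exists [:: setT], setT; split => //; first exact: is_partition_setT.
- by left.
- exists (~` S); split; first exact: measurableC.
  + by apply/eqP; rewrite eq_le CS0 measure_ge0.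
  + by move=> x /= notS Sx; apply: notS.
Qed.

End partitions.

Section nonatomic.
Context {d : measure_display} {T : measurableType d} {R : realType}.
Variable P : probability T R.
Hypothesis P_nonatomic : nonatomic P.

Lemma nonatomic_half (A : set T) : measurable A -> (0 < P A)%E ->
  exists B, [/\ measurable B, B `<=` A, (0 < P B)%E & pr P B <= pr P A / 2].
Proof.
move=> mA PA; have [B [mB BA PB PBA]] := P_nonatomic mA PA.
have [small|big] := leP (pr P B) (pr P A / 2); first by exists B.
have mAB : measurable (A `\` B) by exact: measurableD.
have prAB : pr P (A `\` B) = pr P A - pr P B.
  rewrite /pr measureD ?(setIidr BA) ?fineB ?fin_num_measure //.
  by rewrite -ge0_fin_numE ?fin_num_measure.
exists (A `\` B); split => //; last by rewrite prAB; lra.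
by rewrite prE // prAB lte_fin subr_gt0 -lte_fin -!prE.
Qed.

Lemma nonatomic_small (A : set T) (e : R) : measurable A -> (0 < P A)%E -> 0 < e ->
  exists B, [/\ measurable B, B `<=` A, (0 < P B)%E & pr P B <= e].
Proof.
move=> mA PA e0.
have halving k : exists B, [/\ measurable B, B `<=` A, (0 < P B)%E &
                             pr P B <= 1 / 2 ^+ k].
  elim: k => [|k [B [mB BA PB PBk]]].
    by exists A; split => //; rewrite expr0 divr1 pr_le1.
  have [C [mC CB PC PCB]] := nonatomic_half mB PB.
  exists C; split => //; first exact: subset_trans CB BA.
  apply: (le_trans PCB); rewrite exprS invfM mul1r [leRHS]mulrC ler_pM2r ?invr_gt0 //.
  by rewrite -[_^-1]mul1r.
have [N _ /(_ N (leqnn N)) hN] := near_infty_natSinv_expn_lt (PosNum e0).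
have [B [mB BA PB PBN]] := halving N.
by exists B; split => //; apply: (le_trans PBN); apply: ltW.
Qed.

End nonatomic.

Section ess_sup_on.
Context {d : measure_display} {T : measurableType d} {R : realType}.
Variable P : probability T R.
Local Open Scope ereal_scope.

Definition ess_sup_on (f : T -> R) (A : set T) : \bar R :=
  ess_sup P (fun x => if x \in A then (f x)%:E else -oo).

Variable f : T -> R.

Lemma ess_sup_on_ge (A : set T) :
  {ae P, forall x, A x -> (f x)%:E <= ess_sup_on f A}.
Proof.
have := ess_sup_ge P (fun x => if x \in A then (f x)%:E else -oo).
by apply: filterS => x /= + Ax; rewrite mem_set.
Qed.

Lemma ess_sup_on_le (A : set T) (c : R) :
  {ae P, forall x, A x -> (f x <= c)%R} -> ess_sup_on f A <= c%:E.
Proof.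
move=> le_c; apply/ess_supP; apply: filterS le_c => x /= le_c.
by case: ifPn => [/set_mem/le_c|]; rewrite ?lee_fin ?leNye.
Qed.

Lemma le_ess_sup_on (A B : set T) : B `<=` A -> ess_sup_on f B <= ess_sup_on f A.
Proof.
move=> BA; apply/le_ess_sup/aeW => x /=.
by case: ifPn => [/set_mem/BA/mem_set ->|_]; rewrite ?leNye.
Qed.

Lemma lb_le_ess_sup_on (A : set T) (c : R) : measurable A -> 0 < P A ->
  {ae P, forall x, A x -> (c <= f x)%R} -> c%:E <= ess_sup_on f A.
Proof.
move=> mA PA c_le.
have [x [Ax [le_ess /(_ Ax) cx]]] := ae_witness mA PA
  (filterS2 _ (fun x a b => conj a b) (ess_sup_on_ge A) c_le).
by rewrite (le_trans _ (le_ess Ax)) // lee_fin.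
Qed.

End ess_sup_on.

Section ess_osc.
Context {d : measure_display} {T : measurableType d} {R : realType}.
Variable P : probability T R.

Definition ess_supr_on (f : T -> R) (A : set T) : R := fine (ess_sup_on P f A).

Definition ess_osc (f : T -> R) (A : set T) : R :=
  ess_supr_on f A + ess_supr_on (fun x => - f x) A.

Section bounded.
Variables (f : T -> R) (M : R).
Hypothesis f_le : {ae P, forall x, `|f x| <= M}.

Lemma ess_supr_on_fineK (A : set T) : measurable A -> (0 < P A)%E ->
  (ess_supr_on f A)%:E = ess_sup_on P f A.
Proof.
move=> mA PA; apply: fineK; rewrite fin_numElt; apply/andP; split.
  apply: (@lt_le_trans _ _ (- M)%:E); first exact: ltNyr.
  apply: lb_le_ess_sup_on => //.
  by apply: filterS f_le => x + _; rewrite ler_norml => /andP[].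
apply: (@le_lt_trans _ _ M%:E); last exact: ltry.
by apply: ess_sup_on_le; apply: filterS f_le => x + _; rewrite ler_norml => /andP[].
Qed.

Lemma ess_supr_on_ge (A : set T) : measurable A -> (0 < P A)%E ->
  {ae P, forall x, A x -> f x <= ess_supr_on f A}.
Proof.
move=> mA PA; apply: filterS (ess_sup_on_ge P f A) => x le_ess Ax.
by rewrite -lee_fin ess_supr_on_fineK // le_ess.
Qed.

Lemma ess_supr_on_le (A : set T) (c : R) : measurable A -> (0 < P A)%E ->
  {ae P, forall x, A x -> f x <= c} -> ess_supr_on f A <= c.
Proof. by move=> mA PA le_c; rewrite -lee_fin ess_supr_on_fineK // ess_sup_on_le. Qed.

Lemma ess_supr_on_le_bound (A : set T) : measurable A -> (0 < P A)%E ->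
  ess_supr_on f A <= M.
Proof.
move=> mA PA; apply: ess_supr_on_le => //.
by apply: filterS f_le => x + _; rewrite ler_norml => /andP[].
Qed.

Lemma le_ess_supr_on (A B : set T) : measurable A -> measurable B -> B `<=` A ->
  (0 < P B)%E -> ess_supr_on f B <= ess_supr_on f A.
Proof.
move=> mA mB BA PB; have PA : (0 < P A)%E.
  by apply: (lt_le_trans PB); apply: le_measure; rewrite ?inE.
by rewrite -lee_fin !ess_supr_on_fineK // le_ess_sup_on.
Qed.

End bounded.

Variables (X : T -> R) (M : R).
Hypothesis X_le : {ae P, forall x, `|X x| <= M}.

Let NX_le : {ae P, forall x, `|- X x| <= M}.
Proof. by apply: filterS X_le => x; rewrite normrN. Qed.

Lemma ae_ess_supr_on_bounds (A : set T) : measurable A -> (0 < P A)%E ->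
  {ae P, forall x, A x -> - ess_supr_on (fun x => - X x) A <= X x <= ess_supr_on X A}.
Proof.
move=> mA PA.
apply: filterS2 (ess_supr_on_ge X_le mA PA) (ess_supr_on_ge NX_le mA PA).
move=> x le_sup le_Nsup Ax.
by rewrite le_sup // andbT lerNl le_Nsup.
Qed.

Lemma ess_osc_ge0 (A : set T) : measurable A -> (0 < P A)%E -> 0 <= ess_osc X A.
Proof.
move=> mA PA.
have [x [Ax /(_ Ax) /andP[lb ub]]] := ae_witness mA PA (ae_ess_supr_on_bounds mA PA).
by rewrite /ess_osc -lerBlDr sub0r (le_trans lb ub).
Qed.

Lemma ess_osc_le (A : set T) : measurable A -> (0 < P A)%E -> ess_osc X A <= 2 * M.
Proof.
move=> mA PA; have := ess_supr_on_le_bound X_le mA PA.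
by have := ess_supr_on_le_bound NX_le mA PA; rewrite /ess_osc; lra.
Qed.

Lemma le_ess_osc (A B : set T) : measurable A -> measurable B -> B `<=` A ->
  (0 < P B)%E -> ess_osc X B <= ess_osc X A.
Proof.
move=> mA mB BA PB.
by apply: lerD; [exact: (le_ess_supr_on X_le) | exact: (le_ess_supr_on NX_le)].
Qed.

Lemma ess_osc_le_strip (A : set T) (a e : R) : measurable A -> (0 < P A)%E ->
  {ae P, forall x, A x -> a <= X x <= a + e} -> ess_osc X A <= e.
Proof.
move=> mA PA strip.
have ub : ess_supr_on X A <= a + e.
  apply: (ess_supr_on_le X_le mA PA).
  by apply: filterS strip => x + Ax => /(_ Ax) /andP[].
have lb : ess_supr_on (fun x => - X x) A <= - a.
  apply: (ess_supr_on_le NX_le mA PA).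
  by apply: filterS strip => x + Ax => /(_ Ax) /andP[+ _]; rewrite lerN2.
by rewrite /ess_osc; lra.
Qed.

End ess_osc.

Section mean_on.
Context {d : measure_display} {T : measurableType d} {R : realType}.
Variable P : probability T R.

Lemma integrable_bounded_on (f : T -> R) (A : set T) (K : R) :
  measurable A -> measurable_fun setT f -> (forall x, A x -> `|f x| <= K) ->
  P.-integrable A (EFin \o f).
Proof.
move=> mA mf f_le; apply: measurable_bounded_integrable => //.
- by rewrite -ge0_fin_numE ?measure_ge0 // fin_num_measure.
- exact: measurable_funS mf.
- exists K; split; first exact: num_real.
  by move=> K' KK' x Ax /=; rewrite (le_trans (f_le x Ax)) // ltW.
Qed.

Lemma mean_on_bounds (f : T -> R) (A : set T) (a b : R) :
  measurable A -> (0 < P A)%E -> P.-integrable A (EFin \o f) ->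
  (forall x, A x -> a <= f x <= b) -> a <= mean_on P f A <= b.
Proof.
move=> mA PA intf f_ab; have prA := pr_gt0 mA PA.
have int_cst c : P.-integrable A (EFin \o cst c) := finite_measure_integrable_cst P c mA.
have lb : \int[P]_(x in A) a <= \int[P]_(x in A) f x.
  by apply: (le_Rintegral mA (int_cst a) intf) => x /f_ab /andP[].
have ub : \int[P]_(x in A) f x <= \int[P]_(x in A) b.
  by apply: (le_Rintegral mA intf (int_cst b)) => x /f_ab /andP[].
rewrite !Rintegral_cst // -/(pr P A) in lb ub.
by rewrite /mean_on ler_pdivlMr // ler_pdivrMr // lb ub.
Qed.

Lemma mean_on_ae_bounds (f : T -> R) (A : set T) (a b : R) :
  measurable A -> (0 < P A)%E -> measurable_fun setT f ->
  {ae P, forall x, A x -> a <= f x <= b} -> a <= mean_on P f A <= b.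
Proof.
move=> mA PA mf f_ab.
have [x [Ax /(_ Ax) /andP[ax xb]]] := ae_witness mA PA f_ab.
have ab := le_trans ax xb.
(* f need not be integrable, but its clamp g agrees with it a.e. on A. *)
pose g x := Num.min b (Num.max a (f x)).
have mg : measurable_fun setT g.
  by apply: measurable_minr => //; apply: measurable_maxr.
have g_ab y : a <= g y <= b by rewrite /g le_min ab le_max lexx /= ge_min lexx.
have fg : \int[P]_(y in A) f y = \int[P]_(y in A) g y.
  congr fine; apply: ae_eq_integral => //.
  - by apply/measurable_EFinP; exact: measurable_funS mf.
  - by apply/measurable_EFinP; exact: measurable_funS mg.
  apply: filterS f_ab => y + Ay => /(_ Ay) /andP[ay yb].
  by rewrite /g (max_r ay) (min_r yb).
rewrite /mean_on fg; apply: mean_on_bounds => //.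
apply: (integrable_bounded_on (K := `|a| + `|b|)) => // y _.
have /andP[ay yb] := g_ab y; have := ler_norm b; have := ler_norm (- a).
rewrite normrN ler_norml => aa bb; have := normr_ge0 a; have := normr_ge0 b.
by move=> b0 a0; apply/andP; split; lra.
Qed.

Lemma mean_onZl (f : T -> R) (A : set T) (r : R) :
  measurable A -> P.-integrable A (EFin \o f) ->
  mean_on P (fun x => r * f x) A = r * mean_on P f A.
Proof. by move=> mA intf; rewrite /mean_on RintegralZl // mulrA. Qed.

End mean_on.

Section osc_part.
Context {d : measure_display} {T : measurableType d} {R : realType}.
Variable P : probability T R.

Definition osc_part (X : T -> R) (pi : seq (set T)) (x : T) : R :=
  \sum_(A <- pi) ess_osc P X A * \1_A x.

Variables (X : T -> R) (M : R).
Hypotheses (mX : measurable_fun setT X) (X_le : {ae P, forall x, `|X x| <= M}).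

Lemma osc_part_at (pi : seq (set T)) (A : set T) (x : T) :
  is_partition P pi -> List.In A pi -> A x -> osc_part X pi x = ess_osc P X A.
Proof. exact: sum_partition_at. Qed.

Lemma osc_part_bounds (pi : seq (set T)) (x : T) :
  is_partition P pi -> 0 <= osc_part X pi x <= 2 * M.
Proof.
move=> pi_part; have [atoms _ _ cover] := pi_part.
have [A [piA Ax]] := cover x; have [mA PA] := atoms A piA.
by rewrite (osc_part_at pi_part piA Ax) (ess_osc_ge0 X_le) ?(ess_osc_le X_le).
Qed.

Lemma measurable_osc_part (pi : seq (set T)) :
  is_partition P pi -> measurable_fun setT (osc_part X pi).
Proof.
case=> atoms _ _ _; rewrite /osc_part.
elim: pi atoms => [|A pi IH] atoms.
  by under eq_fun do rewrite big_nil; exact: measurable_cst.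
under eq_fun do rewrite big_cons.
apply: measurable_funD; last by apply: IH => B piB; apply: atoms; right.
apply: measurable_funM => //; apply: measurable_indic.
by have [] := atoms A (or_introl erefl).
Qed.

Lemma le_osc_part_refines (pi pi' : seq (set T)) (x : T) :
  is_partition P pi -> is_partition P pi' -> refines pi pi' ->
  osc_part X pi' x <= osc_part X pi x.
Proof.
move=> pi_part pi'_part fine_pi'.
have [atoms _ _ _] := pi_part; have [atoms' _ _ cover'] := pi'_part.
have [B [pi'B Bx]] := cover' x; have [A [piA BA]] := fine_pi' B pi'B.
have [[mA _] [mB PB]] := (atoms A piA, atoms' B pi'B).
rewrite (osc_part_at pi'_part pi'B Bx) (osc_part_at pi_part piA (BA x Bx)).
exact: (le_ess_osc X_le mA mB BA PB).
Qed.

Lemma condexp_part_dist_le (pi : seq (set T)) : is_partition P pi ->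
  {ae P, forall x, `|condexp_part P X pi x - X x| <= osc_part X pi x}.
Proof.
move=> pi_part; have [atoms _ _ cover] := pi_part.
have : {ae P, forall x, forall A, List.In A pi ->
    A x -> - ess_supr_on P (fun x => - X x) A <= X x <= ess_supr_on P X A}.
  apply: ae_forall_seq => A piA; have [mA PA] := atoms A piA.
  exact: (ae_ess_supr_on_bounds X_le mA PA).
apply: filterS => x X_bounds; have [A [piA Ax]] := cover x.
have [mA PA] := atoms A piA.
rewrite (condexp_part_at X pi_part piA Ax) (osc_part_at pi_part piA Ax) /ess_osc.
have /andP[lb ub] := X_bounds A piA Ax.
have /andP[mlb mub] := mean_on_ae_bounds mA PA mX (ae_ess_supr_on_bounds X_le mA PA).
by rewrite ler_norml; apply/andP; split; lra.
Qed.

Lemma ae_le0_of_le_osc_part (Z : T -> R) : measurable_fun setT Z ->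
  (forall pi, is_partition P pi -> {ae P, forall x, Z x <= osc_part X pi x}) ->
  {ae P, forall x, Z x <= 0}.
Proof.
move=> mZ Z_le; apply: ae_le0_of_superlevel_null => // e e0.
have mE : measurable [set x | e < Z x] by apply: measurable_set_ltr.
apply/eqP; rewrite eq_le measure_ge0 andbT leNgt; apply/negP => PE.
pose g x := X x + M; have mg : measurable_fun setT g by apply: measurable_funD.
have g_ge0 : {ae P, forall x, 0 <= g x}.
  by apply: filterS X_le => x; rewrite ler_norml -lerBlDr sub0r => /andP[].
have [k PEJ] := measure_gt0_strip mE mg PE e0 g_ge0.
set J := [set x | (_ <= g x <= _)%R] in PEJ.
have mJ : measurable J := measurable_set_itvcc _ _ mg.
have PJ : (0 < P J)%E.
  by apply: (lt_le_trans PEJ); apply: le_measure; rewrite ?inE //; exact: measurableI.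
have [pi [A [pi_part piA JA AJ]]] := exists_partition_atom_ae mJ PJ.
have [atoms _ _ _] := pi_part; have [mA PA] := atoms A piA.
have oscA : ess_osc P X A <= e.
  apply: (ess_osc_le_strip X_le (a := k%:R * e - M) mA PA).
  apply: filterS AJ => x + Ax => /(_ Ax) /andP[].
  by rewrite /g -natr1 mulrDl mul1r => lo hi; apply/andP; split; lra.
have [x [[/= Ex Jx] Zx]] := ae_witness (measurableI _ _ mE mJ) PEJ (Z_le pi pi_part).
rewrite (osc_part_at pi_part piA (JA x Jx)) in Zx.
by have := lt_le_trans Ex (le_trans Zx oscA); rewrite ltxx.
Qed.

End osc_part.

Section orlicz.
Context {d : measure_display} {T : measurableType d} {R : realType}.
Variables (P : probability T R) (Phi : R -> R).
Hypothesis Phi_orlicz : orlicz_fun Phi.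

Lemma orlicz_le_linear (t : R) : 0 <= t <= 1 -> Phi t <= t * Phi 1.
Proof.
case: Phi_orlicz => Phi0 Phi_convex _ _ _ t01.
have := Phi_convex 1 0 t ler01 (lexx 0) t01.
by rewrite mulr1 mulr0 addr0 Phi0 mulr0 addr0.
Qed.

Lemma measurable_orlicz_comp (g : T -> R) : measurable_fun setT g ->
  (forall x, 0 <= g x) -> measurable_fun setT (fun x => Phi (g x)).
Proof.
case: Phi_orlicz => _ _ Phi_mono _ _ mg g_ge0.
pose Phi_ext t := Phi (Num.max t 0).
have Phi_ext_mono : {homo Phi_ext : s t / s <= t}.
  move=> s t st; apply: Phi_mono; first by rewrite le_max lexx orbT.
  by rewrite ge_max le_max st /= le_max lexx orbT.
have -> : (fun x => Phi (g x)) = Phi_ext \o g.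
  by apply/funext => x; rewrite /Phi_ext /= max_l.
exact: (measurableT_comp (nondecreasing_measurable measurableT Phi_ext_mono) mg).
Qed.

Lemma in_LPhi_bounded (Y : T -> R) (c : R) : measurable_fun setT Y ->
  (forall x, `|Y x| <= c) -> in_LPhi P Phi Y.
Proof.
move=> mY Y_le; split => //.
have [Phi0 _ Phi_mono Phi_gt0 _] := Phi_orlicz.
have Phi1 : 0 < Phi 1 := Phi_gt0 1 ltr01.
pose lam := (`|c| + 1) * (Phi 1 + 1).
have lam_gt0 : 0 < lam by have := normr_ge0 c; rewrite /lam; nra.
exists lam; split => //.
have t_ge0 x : 0 <= `|Y x| / lam by rewrite divr_ge0 // ltW.
have t_le x : `|Y x| / lam <= `|c| / lam.
  by rewrite ler_pM2r ?invr_gt0 // (le_trans (Y_le x)) // ler_norm.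
have Phi_le1 x : Phi (`|Y x| / lam) <= 1.
  have u_ge0 : 0 <= `|c| / lam by rewrite divr_ge0 // ltW.
  have u_le : `|c| / lam * (Phi 1 + 1) <= 1.
    by rewrite mulrAC ler_pdivrMr // mul1r /lam ler_pM2r ?lerDl // ltr_wpDr.
  move: (t_ge0 x) (t_le x) u_ge0 u_le.
  move: (`|Y x| / lam) (`|c| / lam) => t u t_ge0' tu u_ge0' u_le'.
  have t_le1 : t <= 1 by nra.
  have Phi_t : Phi t <= t * Phi 1 by apply: orlicz_le_linear; rewrite t_ge0' t_le1.
  have tPhi : t * Phi 1 <= u * Phi 1 by rewrite ler_pM2r.
  nra.
apply: (@le_trans _ _ (\int[P]_x (cst 1%:E) x))%E.
  apply: ge0_le_integral => //.
  - by move=> x _; rewrite lee_fin -Phi0 Phi_mono.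
  - apply/measurable_EFinP; apply: measurable_orlicz_comp => // x.
    by apply: measurable_funM => //; exact: measurableT_comp.
  - by move=> x _; rewrite lee_fin Phi_le1.
by rewrite integral_cst // mul1e probability_le1.
Qed.

End orlicz.

Section dominated.
Context {d : measure_display} {T : measurableType d} {R : realType}.
Variable P : probability T R.

Lemma measure_gt0_sign (f : T -> R) (c : R) : measurable_fun setT f ->
  (0 < P [set x | (c < `|f x|)%R])%E ->
  exists2 s : R, s = 1 \/ s = -1 & (0 < P [set x | (c < s * f x)%R])%E.
Proof.
move=> mf Pc; have mS (s : R) : measurable [set x | c < s * f x].
  by apply: measurable_set_ltr => //; apply: measurable_funM.
have : (0 < P ([set x | c < 1 * f x]%R `|` [set x | c < -1 * f x]%R))%E.
  rewrite (_ : _ `|` _ = [set x | c < `|f x|]) //.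
  apply/seteqP; split => x /=; rewrite mul1r mulN1r.
    by case=> /lt_le_trans; apply; rewrite ?ler_norm // -normrN ler_norm.
  move=> cfx; have [fx0|fx0] := leP 0 (f x).
    by left; rewrite -(ger0_norm fx0).
  by right; rewrite -(ltr0_norm fx0).
case/(measure_gt0_setU (mS 1) (mS (-1))) => PS; first by exists 1; [left |].
by exists (-1); [right |].
Qed.

Lemma not_ae_le_level_set (f : T -> R) (c : R) : measurable_fun setT f ->
  ~ {ae P, forall x, `|f x| <= c} ->
  exists s : R, exists m : nat, (s = 1 \/ s = -1) /\
    (0 < P ([set x | c < s * f x] `&` [set x | s * f x <= m%:R])%R)%E.
Proof.
move=> mf unbounded.
have [s s1 Pc] := measure_gt0_sign mf (not_ae_le_measure_gt0 mf unbounded).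
have msf : measurable_fun setT (fun x => s * f x) by apply: measurable_funM.
exists s; suff [m Pm] : exists m : nat,
    (0 < P ([set x | c < s * f x] `&` [set x | s * f x <= m%:R])%R)%E by exists m.
apply: measure_gt0_cover => // [|m|]; first by apply: measurable_set_ltr.
  by apply: measurable_set_ler.
by apply: aeW => x _; exists (Num.truncn (s * f x)).+1; rewrite /= ltW ?truncnS_gt.
Qed.

Lemma mean_on_setU_ge (f : T -> R) (C D : set T) (a b : R) :
  measurable C -> measurable D -> C `&` D = set0 -> (0 < P D)%E ->
  pr P C <= pr P D -> a <= b -> P.-integrable (C `|` D) (EFin \o f) ->
  (forall x, C x -> a <= f x) -> (forall x, D x -> b <= f x) ->
  (a + b) / 2 <= mean_on P f (C `|` D).
Proof.
move=> mC mD CD0 PD CD ab intf a_le b_le; have prD := pr_gt0 mD PD.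
have int_cst (A : set T) c : measurable A -> P.-integrable A (EFin \o cst c).
  exact: finite_measure_integrable_cst.
have [intC intD] : P.-integrable C (EFin \o f) /\ P.-integrable D (EFin \o f).
  by split; apply: integrableS intf => //; exact: measurableU.
have intCD : \int[P]_(x in C `|` D) f x = \int[P]_(x in C) f x + \int[P]_(x in D) f x.
  by apply: Rintegral_setU => //; rewrite disj_set2E CD0.
have prCD : pr P (C `|` D) = pr P C + pr P D.
  by rewrite /pr measureU // fineD // fin_num_measure.
have lbC : \int[P]_(x in C) a <= \int[P]_(x in C) f x.
  exact: (le_Rintegral mC (int_cst _ _ mC) intC).
have lbD : \int[P]_(x in D) b <= \int[P]_(x in D) f x.
  exact: (le_Rintegral mD (int_cst _ _ mD) intD).
rewrite !Rintegral_cst // -!/(pr P _) in lbC lbD.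
have := pr_ge0 P C; rewrite /mean_on intCD prCD ler_pdivlMr ?ltr_wpDl ?pr_ge0 //.
by nra.
Qed.

Lemma condexp_part_far (X : T -> R) (C D : set T) (s K : R) (m : nat) :
  measurable_fun setT X -> measurable C -> measurable D -> (0 < P C)%E ->
  pr P C <= pr P D -> pr P D <= 4^-1 -> s = 1 \/ s = -1 -> 0 <= K ->
  (forall x, C x -> `|X x| <= K) ->
  D `<=` [set x | 5 * K + 1 < s * X x] `&` [set x | s * X x <= m%:R] ->
  exists2 pi, is_partition P pi &
    forall x, C x -> K < `|condexp_part P X pi x - X x|.
Proof.
move=> mX mC mD PC prC prD s1 K_ge0 on_C on_D'.
have sabs y : `|s * y| = `|y| by case: s1 => ->; rewrite ?mul1r ?mulN1r ?normrN.
have on_D x : D x -> 5 * K + 1 < s * X x <= m%:R /\ `|X x| = s * X x.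
  move=> /on_D' [/= lo hi]; rewrite lo hi -(sabs (X x)) ger0_norm //.
  by apply: ltW; apply: le_lt_trans lo; lra.
have PD : (0 < P D)%E by rewrite prE // lte_fin (lt_le_trans (pr_gt0 mC PC)).
have CD0 : C `&` D = set0.
  apply/seteqP; split => // x [/on_C XK /on_D[/andP[lo _] Xs]]; move: XK.
  by rewrite Xs; lra.
set B := C `|` D; have mB : measurable B by exact: measurableU.
have prB : pr P B = pr P C + pr P D.
  by rewrite /pr measureU // fineD // fin_num_measure.
have PB : (0 < P B)%E by rewrite prE // lte_fin prB ltr_wpDl ?pr_ge0 ?pr_gt0.
have PCB : (0 < P (~` B))%E.
  by rewrite probability_setC // prE // -EFinB lte_fin subr_gt0 prB; lra.
have B_part := is_partition_setC mB PB PCB; exists [:: B; ~` B] => // x Cx.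
rewrite (condexp_part_at X B_part (or_introl erefl) (or_introl Cx)).
have X_bnd y : B y -> `|X y| <= K + m%:R.
  by case=> [/on_C|/on_D[/andP[_ Xym] ->]]; have := ler0n R m; lra.
have msX : measurable_fun setT (fun x => s * X x) by apply: measurable_funM.
have int_sX : P.-integrable B (EFin \o (fun y => s * X y)).
  apply: (integrable_bounded_on P (K := K + m%:R) mB msX) => y /X_bnd.
  by rewrite sabs.
have mean_ge : (- K + (5 * K + 1)) / 2 <= mean_on P (fun y => s * X y) B.
  apply: mean_on_setU_ge int_sX _ _ => //; first lra.
    by move=> y /on_C; rewrite -(sabs (X y)) ler_norml => /andP[].
  by move=> y /on_D[/andP[/ltW]].
rewrite mean_onZl // in mean_ge; last exact: integrable_bounded_on X_bnd.
have := on_C x Cx; have := ler_norm (s * mean_on P X B); rewrite sabs.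
by have := ler_normD (mean_on P X B - X x) (X x); rewrite subrK; lra.
Qed.

Lemma in_Linfty_of_condexp_part_dominated (X Y : T -> R) : nonatomic P ->
  measurable_fun setT X -> measurable_fun setT Y ->
  (forall pi, is_partition P pi ->
     {ae P, forall x, `|condexp_part P X pi x - X x| <= Y x}) ->
  in_Linfty P X.
Proof.
move=> nonat mX mY Y_dom; split => //; apply: contrapT => unbounded.
have mXY : measurable_fun setT (fun x => `|X x| + `|Y x|).
  by apply: measurable_funD; apply: measurableT_comp.
have [k PG] := measure_gt0_sublevel P mXY; set K : R := k%:R in PG.
set G := [set x | _] in PG; have mG : measurable G by apply: measurable_set_ler.
have [s [m [s1 PD0]]] := not_ae_le_level_set (c := 5 * K + 1) mX
  (fun b => unbounded (ex_intro _ (5 * K + 1) b)).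
have msX : measurable_fun setT (fun x => s * X x) by apply: measurable_funM.
set D0 := _ `&` _ in PD0; have mD0 : measurable D0.
  by apply: measurableI; [apply: measurable_set_ltr | apply: measurable_set_ler].
have [D [mD DD0 PD prD]] :
    exists D, [/\ measurable D, D `<=` D0, (0 < P D)%E & pr P D <= 4^-1].
  by apply: nonatomic_small; rewrite ?invr_gt0.
have [C [mC CG PC prC]] := nonatomic_small nonat mG PG (pr_gt0 mD PD).
have on_C x : C x -> `|X x| <= K /\ Y x <= K.
  move=> /CG; rewrite /G /= => XY; have := normr_ge0 (X x).
  by have := normr_ge0 (Y x); have := ler_norm (Y x); move=> *; split; lra.
have [pi pi_part far] :=
  condexp_part_far mX mC mD PC prC prD s1 (ler0n R k) (fun x Cx => (on_C x Cx).1) DD0.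
have [x [Cx dist_le]] := ae_witness mC PC (Y_dom _ pi_part).
by have := far x Cx; have := (on_C x Cx).2; lra.
Qed.

End dominated.

Unset Implicit Arguments.

Theorem proposition3p3 (d : measure_display) (T : measurableType d)
  (R : realType) (P : probability T R) (Phi : R -> R) (X : T -> R) :
  nonatomic P -> orlicz_fun Phi -> in_LPhi P Phi X ->
  (order_conv P Phi (is_partition P) refines (condexp_part P X) X
   <-> in_Linfty P X).
Proof.
move=> nonat Phi_orlicz [mX _]; split.
- case=> Y [Y_LPhi Y_dec _ _ Y_dom].
  have [mY _] := Y_LPhi _ (is_partition_setT P).
  apply: (in_Linfty_of_condexp_part_dominated nonat mX mY) => pi pi_part.
  have coarse : refines [:: setT] pi by move=> B _; exists setT; split => //; left.
  apply: filterS2 (Y_dom pi pi_part) (Y_dec _ _ (is_partition_setT P) pi_part coarse).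
  by move=> x; exact: le_trans.
- case=> _ [M X_le]; exists (osc_part P X); split.
  + move=> pi pi_part; apply: (in_LPhi_bounded P Phi_orlicz (c := 2 * M)).
      exact: measurable_osc_part.
    move=> x; have /andP[ge0 le2M] := osc_part_bounds X_le x pi_part.
    by rewrite ger0_norm.
  + move=> pi pi' pi_part pi'_part fine_pi'; apply: aeW => x.
    exact: (le_osc_part_refines X_le).
  + by move=> pi pi_part; apply: aeW => x; have /andP[] := osc_part_bounds X_le x pi_part.
  + by move=> Z [mZ _]; exact: (ae_le0_of_le_osc_part mX X_le mZ).
  + by move=> pi; exact: (condexp_part_dist_le mX X_le).
Qed.
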